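(* Let $\Gamma=\langle V,(w_u)_{u\in V},\alpha,\beta\rangle$ be a celebrity game with $\beta>1$ and $n=|V|$. Every Nash equilibrium graph of $\Gamma$ is either connected or equal to the edgeless graph $I_n$ on $V$.
   Context: A celebrity game $\Gamma=\langle V,(w_u)_{u\in V},\alpha,\beta\rangle$ consists of a set of players $V=\{1,\dots,n\}$, celebrity weights $w_u>0$, a link cost $\alpha>0$ and a critical distance $\beta$ with $1\le\beta\le n-1$. A strategy of player $u$ is a set $S_u\subseteq V\setminus\{u\}$; a strategy profile is $S=(S_1,\dots,S_n)$; its outcome graph $G[S]$ is the undirected graph on $V$ with edge set $\{\{u,v\}: u\in S_v\text{ or }v\in S_u\}$. With $d_G$ the graph distance (infinite between different connected components), the cost of player $u$ is $c_u(S)=\alpha|S_u|+\sum_{v:\,d_{G[S]}(u,v)>\beta}w_v$. $S$ is a Nash equilibrium if no player can strictly decrease its cost by changing only its own strategy; a graph $G$ is a Nash equilibrium graph of $\Gamma$ if $G=G[S]$ for some Nash equilibrium $S$. *)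

From mathcomp Require Import all_boot all_order all_algebra.
Set Implicit Arguments. Unset Strict Implicit. Unset Printing Implicit Defensive.
Import Order.TTheory GRing.Theory Num.Theory.
Local Open Scope ring_scope.

Definition profile (n : nat) := 'I_n -> {set 'I_n}.

Definition valid_profile n (S : profile n) : Prop := forall u, u \notin S u.

Definition outcome_edge n (S : profile n) : rel 'I_n :=
  fun u v => (v \in S u) || (u \in S v).

Fixpoint ball n (S : profile n) (k : nat) (u : 'I_n) : {set 'I_n} :=
  match k with
  | 0 => [set u]
  | k'.+1 => ball S k' u :|: [set v | [exists x in ball S k' u, outcome_edge S x v]]
  end.

Definition cost (R : numDomainType) n (w : 'I_n -> R) (alpha : R) (beta : nat)
  (S : profile n) (u : 'I_n) : R :=
  alpha * (#|S u|)%:R + \sum_(v in ~: ball S beta u) w v.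

Definition deviate n (S : profile n) (u : 'I_n) (Su : {set 'I_n}) : profile n :=
  fun x => if x == u then Su else S x.

Definition nash_equilibrium (R : numDomainType) n (w : 'I_n -> R) (alpha : R)
  (beta : nat) (S : profile n) : Prop :=
  valid_profile S /\
  forall (u : 'I_n) (Su : {set 'I_n}), u \notin Su ->
    cost w alpha beta S u <= cost w alpha beta (deviate S u Su) u.

Definition outcome_connected n (S : profile n) : Prop :=
  forall u v : 'I_n, connect (outcome_edge S) u v.

Definition outcome_edgeless n (S : profile n) : Prop :=
  forall u v : 'I_n, ~~ outcome_edge S u v.

From mathcomp Require Import all_boot all_order all_algebra.
From mathcomp Require Import lra.
Import Order.TTheory GRing.Theory Num.Theory.
Set Implicit Arguments. Unset Strict Implicit. Unset Printing Implicit Defensive.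
Local Open Scope ring_scope.

(* Suppose some player u buys a link to v and some player x lies in another
   component than u.  Since u keeps the link, alpha is at most the weight of
   the set L of players u would lose by dropping it; every player of L is
   within beta - 1 of v.  If x bought a link to v instead, it would reach v in
   one step, hence all of L and (as beta > 1) also u itself, none of which it
   reaches now.  So x would gain at least w(L) + w(u) > alpha for a price of
   alpha, contradicting equilibrium. *)

Lemma sum_setC_subset (V : nmodType) (T : finType) (F : T -> V) (B B' : {set T}) :
  B \subset B' ->
  \sum_(i in ~: B) F i = \sum_(i in ~: B') F i + \sum_(i in B' :\: B) F i.
Proof.
move=> sBB'; rewrite (big_setID (~: B')) /=; congr (_ + _); apply: eq_bigl => i.
  by rewrite !inE andb_idl //; apply: contra => /(subsetP sBB').
by rewrite !inE negbK andbC.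
Qed.

Lemma ler_sum_subset (R : numDomainType) (T : finType) (F : T -> R) (A B : {set T}) :
  (forall i, 0 <= F i) -> A \subset B -> \sum_(i in A) F i <= \sum_(i in B) F i.
Proof.
move=> F_ge0 sAB; rewrite [leRHS](big_setID A) (setIidPr sAB) /= lerDl.
exact: sumr_ge0.
Qed.

Section Balls.

Variable n : nat.
Implicit Types (S T : profile n) (a b u v x y : 'I_n) (A : {set 'I_n}).

Lemma outcome_edge_sym S : symmetric (outcome_edge S).
Proof. by move=> a b; rewrite /outcome_edge orbC. Qed.

Lemma ballS S k a y :
  (y \in ball S k.+1 a) = (y \in ball S k a) || [exists x in ball S k a, outcome_edge S x y].
Proof. by rewrite /= in_setU inE. Qed.

Lemma ball_center S k a : a \in ball S k a.
Proof. by elim: k => [|k IH]; [exact: set11 | rewrite ballS IH]. Qed.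

Lemma subset_ball S k l a : (k <= l)%N -> ball S k a \subset ball S l a.
Proof.
elim: l => [|l IH]; first by rewrite leqn0 => /eqP ->.
rewrite leq_eqVlt => /predU1P [-> //|/IH sub]; apply: (subset_trans sub).
by apply/subsetP => y y_in; rewrite ballS y_in.
Qed.

Lemma subrel_ball S T k a :
  subrel (outcome_edge S) (outcome_edge T) -> ball S k a \subset ball T k a.
Proof.
move=> sST; elim: k => [//|k IH]; apply/subsetP => y.
rewrite !ballS => /orP [y_in|/existsP [z /andP [z_in Ezy]]].
  by rewrite (subsetP IH).
by apply/orP; right; apply/existsP; exists z; rewrite (subsetP IH) //= sST.
Qed.

Lemma subset_ball_edge S k a b : outcome_edge S a b -> ball S k b \subset ball S k.+1 a.
Proof.
move=> Eab; elim: k => [|k IH]; apply/subsetP => y.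
  by move=> /set1P ->; rewrite ballS; apply/orP; right; apply/existsP; exists a;
     rewrite Eab ball_center.
rewrite ballS => /orP [y_in|/existsP [z /andP [z_in Ezy]]]; rewrite ballS.
  by rewrite (subsetP IH).
by apply/orP; right; apply/existsP; exists z; rewrite (subsetP IH).
Qed.

Lemma connect_ball S k a y : y \in ball S k a -> connect (outcome_edge S) a y.
Proof.
elim: k y => [|k IH] y; first by move=> /set1P ->.
rewrite ballS => /orP [/IH //|/existsP [z /andP [/IH az Ezy]]].
exact: connect_trans az (connect1 Ezy).
Qed.

Lemma deviate_self S u A : deviate S u A u = A.
Proof. by rewrite /deviate eqxx. Qed.

Lemma subrel_outcome_edge S T :
  (forall x, S x \subset T x) -> subrel (outcome_edge S) (outcome_edge T).
Proof.
by move=> sST a b /orP [] /(subsetP (sST _)); rewrite /outcome_edge => ->; rewrite ?orbT.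
Qed.

Lemma outcome_edge_deviate_sub S u A :
  A \subset S u -> subrel (outcome_edge (deviate S u A)) (outcome_edge S).
Proof.
by move=> sA; apply: subrel_outcome_edge => x; rewrite /deviate; case: eqP => [->|].
Qed.

Lemma outcome_edge_deviate_sup S u A :
  S u \subset A -> subrel (outcome_edge S) (outcome_edge (deviate S u A)).
Proof.
by move=> sA; apply: subrel_outcome_edge => x; rewrite /deviate; case: eqP => [->|].
Qed.

Lemma outcome_edge_drop_link S u v a b : u \notin S u ->
  outcome_edge S a b -> ~~ outcome_edge (deviate S u (S u :\ v)) a b ->
  (a == u) && (b == v) || (a == v) && (b == u).
Proof.
rewrite /outcome_edge /deviate => uSu.
case: (a =P u) => [->|_]; case: (b =P u) => [->|_] //=; rewrite ?inE.
- by rewrite (negbTE uSu).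
- by rewrite andbF; case: (b == v); case: (b \in S u); case: (u \in S b).
- by rewrite andbT; case: (a == v); case: (a \in S u); case: (u \in S a).
- by move=> ->.
Qed.

Lemma ball_drop_link S u v k y : u \notin S u ->
  y \in ball S k u ->
  (y \in ball (deviate S u (S u :\ v)) k u) || (0 < k)%N && (y \in ball S k.-1 v).
Proof.
set S' := deviate S u (S u :\ v) => uSu.
elim: k y => [|k IH] y; first by move=> ->.
rewrite ballS => /orP [/IH /orP [y_in|/andP [k_gt0 y_in]]|/existsP [z /andP [/IH z_in Ezy]]].
- by rewrite ballS y_in.
- by rewrite (subsetP (subset_ball _ _ (leq_pred k))) ?orbT.
case/orP: z_in => [z_in|/andP [k_gt0 z_in]].
  have [E'zy|] := boolP (outcome_edge S' z y).
    by rewrite ballS; apply/orP; left; apply/orP; right; apply/existsP; exists z; rewrite z_in.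
  case/(outcome_edge_drop_link uSu Ezy)/orP => [/andP [_ /eqP ->]|/andP [_ /eqP ->]].
    by rewrite (subsetP (subset_ball _ _ (leq0n k))) ?ball_center ?orbT.
  by rewrite ball_center.
rewrite /= -(prednK k_gt0) ballS; apply/orP; right; apply/orP; right.
by apply/existsP; exists z; rewrite z_in.
Qed.

End Balls.

Section Equilibrium.

Variables (R : numDomainType) (n : nat) (w : 'I_n -> R) (alpha : R) (beta : nat).
Variable S : profile n.
Hypothesis NE : nash_equilibrium w alpha beta S.

Lemma ne_drop_link u v : v \in S u ->
  alpha <= \sum_(y in ball S beta u :\: ball (deviate S u (S u :\ v)) beta u) w y.
Proof.
move=> vSu; have [validS /(_ u (S u :\ v))] := NE.
rewrite !inE (negbTE (validS u)) andbF => /(_ isT).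
rewrite /cost deviate_self (cardsD1 v (S u)) vSu natrD mulrDr mulr1.
have sub_ball := subrel_ball beta u (outcome_edge_deviate_sub (subD1set (S u) v)).
rewrite [X in _ <= _ + X](sum_setC_subset w sub_ball).
by rewrite -[leLHS]addrA [leLHS]addrC [leRHS]addrA lerD2l.
Qed.

Lemma ne_add_link x v : v \notin S x -> v != x ->
  \sum_(y in ball (deviate S x (v |: S x)) beta x :\: ball S beta x) w y <= alpha.
Proof.
move=> vSx vx; have [validS /(_ x (v |: S x))] := NE.
rewrite !inE (negbTE (validS x)) eq_sym (negbTE vx) => /(_ isT).
rewrite /cost deviate_self cardsU1 vSx natrD mulrDr mulr1.
have sub_ball := subrel_ball beta x (outcome_edge_deviate_sup (subsetUr [set v] (S x))).
rewrite [X in _ + X <= _](sum_setC_subset w sub_ball).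
by rewrite [leLHS]addrA [_ + alpha * _]addrC [leRHS]addrAC lerD2l.
Qed.

End Equilibrium.

Lemma ne_link_connects (R : realDomainType) n (w : 'I_n -> R) alpha beta
    (S : profile n) u v :
  (forall y, 0 < w y) -> (1 < beta)%N -> nash_equilibrium w alpha beta S ->
  v \in S u -> forall x, connect (outcome_edge S) u x.
Proof.
move=> w_gt0 beta_gt1 NE vSu x; apply/negPn/negP => nux.
have csym := sym_connect_sym (outcome_edge_sym S).
have Euv : outcome_edge S u v by rewrite /outcome_edge vSu.
have nvx : ~~ connect (outcome_edge S) v x.
  by apply: contra nux; apply: connect_trans (connect1 Euv).
have vx : v != x by apply: contraNneq nvx => ->.
have vSx : v \notin S x.
  by apply: contra nvx => vSx; rewrite csym connect1 // /outcome_edge vSx.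
set S' := deviate S u (S u :\ v); set T := deviate S x (v |: S x).
set L := ball S beta u :\: ball S' beta u.
set X := ball T beta x :\: ball S beta x.
have near_v : u |: L \subset ball S beta.-1 v.
  rewrite subUset sub1set; apply/andP; split.
    have beta1_gt0 : (0 < beta.-1)%N by rewrite -ltnS prednK // ltnW.
    apply: (subsetP (subset_ball _ _ beta1_gt0)).
    apply: (subsetP (subset_ball_edge 0 (_ : outcome_edge S v u))); last exact: ball_center.
    by rewrite outcome_edge_sym.
  apply/subsetP => y; rewrite inE => /andP [yS' /(ball_drop_link v (proj1 NE u))].
  by rewrite (negbTE yS') => /andP [].
have v_to_x : ball S beta.-1 v \subset ball T beta x.
  apply: subset_trans (subrel_ball _ _ (outcome_edge_deviate_sup (subsetUr [set v] (S x)))) _.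
  rewrite -[X in ball T X x](prednK (ltnW beta_gt1)); apply: subset_ball_edge.
  by rewrite /outcome_edge /T /deviate eqxx setU11.
have far_x : u |: L \subset ~: ball S beta x.
  apply/subsetP => y; rewrite !inE => /predU1P [->|/andP [_ /connect_ball uy]];
    apply: contra nux => /connect_ball xy; [by rewrite csym|].
  by apply: connect_trans uy _; rewrite csym.
have uLX : u |: L \subset X by rewrite /X setDE subsetI far_x (subset_trans near_v v_to_x).
have uL : u \notin L by rewrite inE ball_center.
have gain := ler_sum_subset (fun y => ltW (w_gt0 y)) uLX.
rewrite big_setU1 //= in gain.
have := ne_drop_link NE vSu; have := ne_add_link NE vSx vx; have := w_gt0 u.
rewrite -/S' -/T -/L -/X; lra.
Qed.

Theorem proposition3 (R : realFieldType) (n : nat) (w : 'I_n -> R) (alpha : R)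
  (beta : nat) (S : profile n) :
  (forall u, 0 < w u) -> 0 < alpha ->
  (1 <= beta)%N -> (beta <= n.-1)%N -> (1 < beta)%N ->
  nash_equilibrium w alpha beta S ->
  outcome_connected S \/ outcome_edgeless S.
Proof.
move=> w_gt0 _ _ _ beta_gt1 NE.
have [/existsP [u /existsP [v vSu]]|no_link] := boolP [exists u, exists v, v \in S u].
  have cu := ne_link_connects w_gt0 beta_gt1 NE vSu.
  left => a b; apply: connect_trans (cu b).
  by rewrite (sym_connect_sym (outcome_edge_sym S)).
right => a b; apply: contra no_link => /orP [bSa|aSb].
  by apply/existsP; exists a; apply/existsP; exists b.
by apply/existsP; exists b; apply/existsP; exists a.
Qed.
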